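(* For every state $(s,t)$ and price $p\in[p_l,p_h]$, \[ \big\|\widehat P_n(\cdot\mid s,p)-\widetilde P_n(\cdot\mid s,p)\big\|_1\le\frac{|\mu_n(p)-h(p)|}{\sigma_n(p)}. \]
   Context: Let $s\in\{0,1,\dots,C\}$ and $p\in[p_l,p_h]$. Let $\mu_n(p)\in\mathbb{R}$ and $\sigma_n(p)>0$ be the posterior mean and standard deviation of a Gaussian process demand model in season $n$, and $h(p)\in\mathbb{R}$ the true expected demand at price $p$. Define intervals $I_0=(-\infty,\tfrac12)$, $I_q=[q-\tfrac12,q+\tfrac12]$ for $0<q<s$, $I_s=[s-\tfrac12,\infty)$ (when $s=0$, $I_0=\mathbb{R}$), and for $q\in\{0,\dots,s\}$ \[ \widehat P_n(q\mid s,p)=\int_{I_q}\mathcal{N}(y;\mu_n(p),\sigma_n^2(p))\,dy,\qquad \widetilde P_n(q\mid s,p)=\int_{I_q}\mathcal{N}(y;h(p),\sigma_n^2(p))\,dy, \] i.e. Gaussian mass in unit bins around integers, with all mass outside $[-\tfrac12,s+\tfrac12)$ assigned to the endpoints $q=0$ or $q=s$. $\|\cdot\|_1$ is the $\ell_1$ norm over $q\in\{0,\dots,s\}$. *)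

From HB Require Import structures.
From mathcomp Require Import all_boot all_order all_algebra.
From mathcomp Require Import all_classical all_reals all_analysis.

Set Implicit Arguments.
Unset Strict Implicit.
Unset Printing Implicit Defensive.

Import Order.TTheory GRing.Theory Num.Theory.
Local Open Scope classical_set_scope.
Local Open Scope ring_scope.

Definition bin {R : realType} (s q : nat) : set R :=
  if s == 0%N then setT
  else if q == 0%N then [set` `]-oo, (2^-1 : R)[ ]
  else if q == s then [set` `[(s%:R - 2^-1 : R), +oo[ ]
  else [set` `[(q%:R - 2^-1 : R), q%:R + 2^-1] ].

Definition binmass {R : realType} (m sd : R) (s q : nat) : R :=
  fine (normal_prob m sd (bin s q)).

Definition binl1 {R : realType} (m1 m2 sd : R) (s : nat) : R :=
  \sum_(q < s.+1) `| binmass m1 sd s q - binmass m2 sd s q |.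

From HB Require Import structures.
From mathcomp Require Import all_boot all_order all_algebra.
From mathcomp Require Import all_classical all_reals all_analysis.
From mathcomp Require Import lra measurable_realfun.
Import Order.TTheory GRing.Theory Num.Theory.
Import numFieldTopology.Exports.
Local Open Scope classical_set_scope.
Local Open Scope ring_scope.

(* Let a <= b and write D t for the difference of the distribution functions
   of N(a, s^2) and N(b, s^2).  As N(b, s^2) is N(a, s^2) translated by b - a,
   D t is the N(a, s^2)-mass of the window ]t - (b - a), t], hence
   0 <= D <= (b - a) / (s sqrt(2 pi)).  Left of the midpoint (a + b) / 2 the
   density of N(a, s^2) dominates that of N(b, s^2) and right of it the
   converse holds, so D is unimodal.  The binned masses are increments of the
   distribution functions between the bin edges q + 1/2, so the l1 distance is
   the variation of D along the edges plus the two boundary values, which for a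
   unimodal function is at most 2 max D <= (b - a) / s. *)

Lemma subrACA (V : zmodType) (x y z w : V) : (x - y) - (z - w) = (x - z) - (y - w).
Proof. by rewrite !opprD !opprK addrACA. Qed.

Section unimodal_variation.
Variables (R : realFieldType) (D : R -> R) (M c : R) (x : nat -> R).
Hypothesis x_nondecr : forall i, x i <= x i.+1.
Hypothesis D_bounded : forall t, 0 <= D t <= M.
Hypothesis D_nondecr : forall s t, s <= t -> t <= c -> D s <= D t.
Hypothesis D_nonincr : forall s t, c <= s -> s <= t -> D t <= D s.

Let V k := D (x 0%N) + \sum_(i < k) `|D (x i.+1) - D (x i)|.

Let V_rising k : x k <= c -> V k <= D (x k).
Proof.
elim: k => [|k IHk] xkc; first by rewrite /V big_ord0 addr0.
have xk_c : x k <= c := le_trans (x_nondecr k) xkc.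
rewrite /V big_ord_recr /= addrA -/(V k).
rewrite ger0_norm ?subr_ge0; last exact: D_nondecr.
by have := IHk xk_c; lra.
Qed.

Let V_le k : V k + D (x k) <= M *+ 2.
Proof.
elim: k => [|k IHk].
  by rewrite /V big_ord0 addr0 mulr2n; have /andP[] := D_bounded (x 0%N); lra.
have /andP[Dk0 DkM] := D_bounded (x k); have /andP[DSk0 DSkM] := D_bounded (x k.+1).
have [xSkc|cxSk] := lerP (x k.+1) c.
  by have := V_rising _ xSkc; rewrite mulr2n; lra.
rewrite /V big_ord_recr /= addrA -/(V k).
have [xkc|cxk] := lerP (x k) c.
  have := V_rising _ xkc; have : `|D (x k.+1) - D (x k)| <= M *+ 2 - D (x k.+1) - D (x k).
    by rewrite ler_norml mulr2n; apply/andP; split; lra.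
  lra.
rewrite ler0_norm ?subr_le0; last exact: D_nonincr (ltW cxk) (x_nondecr k).
lra.
Qed.

Lemma unimodal_variation_le k :
  `|D (x 0%N)| + \sum_(i < k) `|D (x i.+1) - D (x i)| + `|D (x k)| <= M *+ 2.
Proof.
have /andP[D0 _] := D_bounded (x 0%N); have /andP[Dk _] := D_bounded (x k).
by rewrite (ger0_norm D0) (ger0_norm Dk); exact: V_le.
Qed.

End unimodal_variation.

Definition real_cdf {R : realType} (P : probability (measurableTypeR R) R) (x : R) : R :=
  fine (P [set` `]-oo, x]]).

Definition bin_edge {R : realType} (i : nat) : R := i%:R + 2^-1.

Section atomless_cdf.
Context {R : realType} {P : probability (measurableTypeR R) R}.
(* Needed since [bin] mixes open and closed ends and neighbouring bins share an edge. *)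
Hypothesis P_atomless : forall a : R, P [set a] = 0%E.

Local Notation F := (real_cdf P).
Let fine_measure_itv_split (l x u : itv_bound R) : (l <= x)%O -> (x <= u)%O ->
  fine (P [set` Interval l u]) =
  fine (P [set` Interval l x]) + fine (P [set` Interval x u]).
Proof.
move=> lx xu; rewrite (itv_bndbnd_setU lx xu) measureU// ?fineD ?fin_num_measure//.
apply/seteqP; split=> // z [/=]; rewrite !itv_boundlr => /andP[_ zx] /andP[xz _].
by have := le_trans zx xz; rewrite bnd_simp ltxx.
Qed.

Lemma real_cdf_oc a b : a <= b -> fine (P [set` `]a, b]]) = F b - F a.
Proof.
move=> ab; rewrite /real_cdf (@fine_measure_itv_split -oo%O (BRight a)) ?bnd_simp//.
by rewrite addrAC subrr add0r.
Qed.

Lemma real_cdf_Nyo a : fine (P [set` `]-oo, a[]) = F a.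
Proof.
rewrite /real_cdf -(@setUitv1 _ _ _ a true)// measureU//.
  by rewrite [X in (_ + X)%E]P_atomless adde0.
by apply/seteqP; split => y //=; rewrite in_itv/= => -[] + ya; rewrite ya ltxx.
Qed.

Lemma real_cdf_cc a b : a <= b -> fine (P [set` `[a, b]]) = F b - F a.
Proof.
move=> ab; rewrite /real_cdf (@fine_measure_itv_split -oo%O (BLeft a)) ?bnd_simp//.
by rewrite real_cdf_Nyo addrAC subrr add0r.
Qed.

Lemma real_cdf_cy a : fine (P [set` `[a, +oo[]) = 1 - F a.
Proof.
have := @fine_measure_itv_split -oo%O (BLeft a) +oo%O isT isT.
rewrite set_itvNyy [X in fine X = _]probability_setT real_cdf_Nyo /=.
lra.
Qed.

Lemma prob_bin0 k : fine (P (bin k.+1 0)) = F (bin_edge 0).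
Proof. by rewrite /bin_edge mulr0n add0r /= real_cdf_Nyo. Qed.

Let bin_edge_pred j : j.+1%:R - 2^-1 = bin_edge j :> R.
Proof. by rewrite /bin_edge -addn1 natrD; lra. Qed.

Lemma prob_binS k i : (i < k)%N ->
  fine (P (bin k.+1 i.+1)) = F (bin_edge i.+1) - F (bin_edge i).
Proof.
move=> ik; rewrite /bin /= eqSS (ltn_eqF ik) bin_edge_pred -real_cdf_cc//.
by rewrite /bin_edge lerD2r ler_nat.
Qed.

Lemma prob_bin_last k : fine (P (bin k.+1 k.+1)) = 1 - F (bin_edge k).
Proof. by rewrite /bin /= eqxx bin_edge_pred real_cdf_cy. Qed.

End atomless_cdf.

Section binned_l1_translate.
Variables (R : realType) (P Q : probability (measurableTypeR R) R) (d M c : R).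
Hypothesis P_atomless : forall a : R, P [set a] = 0%E.
Hypothesis Q_atomless : forall a : R, Q [set a] = 0%E.
Hypothesis d_ge0 : 0 <= d.
Hypothesis Q_translate : forall x, real_cdf Q x = real_cdf P (x - d).
Hypothesis P_window_le : forall x, fine (P [set` `]x - d, x]]) <= M.
Hypothesis P_dominates_left : forall s t, t <= c ->
  fine (Q [set` `]s, t]]) <= fine (P [set` `]s, t]]).
Hypothesis Q_dominates_right : forall s t, c <= s ->
  fine (P [set` `]s, t]]) <= fine (Q [set` `]s, t]]).

Let D x := real_cdf P x - real_cdf Q x.

Let D_bounded x : 0 <= D x <= M.
Proof.
have xdx : x - d <= x by rewrite gerBl.
rewrite /D Q_translate -(real_cdf_oc _ _ xdx) P_window_le andbT.
by rewrite fine_ge0 ?measure_ge0.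
Qed.

Let D_increment s t : s <= t ->
  D t - D s = fine (P [set` `]s, t]]) - fine (Q [set` `]s, t]]).
Proof. by move=> st; rewrite /D subrACA !real_cdf_oc. Qed.

Let D_nondecr s t : s <= t -> t <= c -> D s <= D t.
Proof. by move=> st tc; rewrite -subr_ge0 D_increment// subr_ge0 P_dominates_left. Qed.

Let D_nonincr s t : c <= s -> s <= t -> D t <= D s.
Proof. by move=> cs st; rewrite -subr_le0 D_increment// subr_le0 Q_dominates_right. Qed.

Let binned_l1_variation k :
  \sum_(q < k.+2) `|fine (P (bin k.+1 q)) - fine (Q (bin k.+1 q))| =
  `|D (bin_edge 0)| + \sum_(i < k) `|D (bin_edge i.+1) - D (bin_edge i)| +
  `|D (bin_edge k)|.
Proof.
rewrite big_ord_recl big_ord_recr /= -addrA.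
rewrite (prob_bin0 P_atomless) (prob_bin0 Q_atomless).
rewrite (prob_bin_last P_atomless) (prob_bin_last Q_atomless).
congr (_ + (_ + _)).
  apply: eq_bigr => i _; rewrite /bump add1n.
  by rewrite (prob_binS P_atomless)// (prob_binS Q_atomless)// subrACA.
by rewrite subrACA subrr sub0r normrN.
Qed.

Lemma binned_l1_translate_le s :
  \sum_(q < s.+1) `|fine (P (bin s q)) - fine (Q (bin s q))| <= M *+ 2.
Proof.
have /andP[D0 D0M] := D_bounded 0.
case: s => [|k].
  rewrite big_ord1 /bin /= [X in fine X]probability_setT.
  by rewrite [X in _ - fine X]probability_setT subrr normr0 mulrn_wge0// (le_trans D0).
rewrite binned_l1_variation.
apply: (@unimodal_variation_le _ D M c bin_edge _ D_bounded D_nondecr D_nonincr) => i.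
by rewrite /bin_edge lerD2r ler_nat.
Qed.

End binned_l1_translate.

Section normal_binl1.
Variables (R : realType) (sg : R).
Hypothesis sg_gt0 : 0 < sg.

Lemma normal_prob_atomless m a : normal_prob m sg [set a] = 0%E.
Proof. exact: integral_set1. Qed.

Lemma normal_pdf_shift m d x : normal_pdf m sg (x + d) = normal_pdf (m - d) sg x.
Proof. by rewrite /normal_pdf gt_eqF// /normal_fun opprB addrA addrAC. Qed.

Lemma normal_prob_Nyc_shift m d b :
  normal_prob m sg [set` `]-oo, b + d]] = normal_prob (m - d) sg [set` `]-oo, b]].
Proof.
pose F x : R := x + d.
have F'E : F^`()%classic = cst 1.
  by apply/funext => x; rewrite /F derive1E deriveD// derive_cst derive_id addr0.
rewrite -[b + d]/(F b) /normal_prob (@increasing_ge0_integration_by_substitutionNy _ F).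
- by apply: eq_integral => x _; rewrite F'E !fctE /= mulr1 -normal_pdf_shift.
- by move=> x y _ _; rewrite /F ltrD2r.
- by rewrite F'E => x _; exact: cvg_cst.
- by rewrite F'E; exact: is_cvg_cst.
- by rewrite F'E; exact: cvg_cst.
- split; first by move=> x _; rewrite /F; exact: derivableD.
  apply: cvg_at_left_filter; rewrite /F.
  by apply: (@cvgD _ R^o); [exact: cvg_id|exact: cvg_cst].
- exact: cvg_addrr_Ny.
- by apply: continuous_subspaceT => x; apply: continuous_normal_pdf; rewrite gt_eqF.
- by move=> x _; exact: normal_pdf_ge0.
Qed.

Lemma normal_cdf_shift a b x :
  real_cdf (normal_prob b sg) x = real_cdf (normal_prob a sg) (x - (b - a)).
Proof.
have := normal_prob_Nyc_shift b (b - a) (x - (b - a)).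
by rewrite subrK subKr => shift; rewrite /real_cdf; congr fine.
Qed.

Lemma normal_prob_oc_le m a b : a <= b ->
  fine (normal_prob m sg [set` `]a, b]]) <= (b - a) * normal_peak sg.
Proof.
move=> ab; rewrite -lee_fin fineK ?fin_num_measure//.
apply: (@le_trans _ _ (\int[lebesgue_measure]_(x in `]a, b]) (normal_peak sg)%:E)%E).
  apply: ge0_le_integral => //.
  - by move=> x _; rewrite lee_fin normal_pdf_ge0.
  - by apply/measurable_EFinP; apply: measurable_funTS; exact: measurable_normal_pdf.
  - by move=> x _; rewrite lee_fin normal_pdf_ub// gt_eqF.
rewrite integral_cst// [X in (_ * X)%E]lebesgue_measure_itv/= lte_fin.
case: ltgtP ab => // [ab _|-> _]; first by rewrite -EFinD -EFinM mulrC.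
by rewrite mule0 subrr mul0r.
Qed.

Lemma normal_pdf_le_closer m1 m2 y : (y - m1) ^+ 2 <= (y - m2) ^+ 2 ->
  normal_pdf m2 sg y <= normal_pdf m1 sg y.
Proof.
move=> h; rewrite /normal_pdf gt_eqF// /normal_fun.
rewrite ler_pM2l ?normal_peak_gt0 ?gt_eqF// ler_expR !mulNr lerN2.
by rewrite ler_pM2r// invr_gt0 pmulrn_lgt0// exprn_gt0.
Qed.

Lemma normal_prob_le_closer m1 m2 (A : set R) : measurable A ->
  (forall y, A y -> (y - m1) ^+ 2 <= (y - m2) ^+ 2) ->
  fine (normal_prob m2 sg A) <= fine (normal_prob m1 sg A).
Proof.
move=> mA closer; rewrite fine_le ?fin_num_measure//.
apply: ge0_le_integral => //.
- by move=> x _; rewrite lee_fin normal_pdf_ge0.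
- by apply/measurable_EFinP; apply: measurable_funTS; exact: measurable_normal_pdf.
- by apply/measurable_EFinP; apply: measurable_funTS; exact: measurable_normal_pdf.
- by move=> x Ax; rewrite lee_fin normal_pdf_le_closer// closer.
Qed.

Lemma normal_peak_le : normal_peak sg *+ 2 <= sg^-1.
Proof.
have two_sg_le : 2 * sg <= Num.sqrt (sg ^+ 2 * pi *+ 2).
  have sg2 : 0 <= 2 * sg by rewrite mulr_ge0// ltW.
  rewrite -(ger0_norm sg2) -sqrtr_sqr ler_sqrt; last first.
    by rewrite mulrn_wge0// mulr_ge0 ?sqr_ge0 ?pi_ge0.
  by rewrite -mulr_natr; have := @pi_ge2 R; have := sqr_ge0 sg; nra.
have sqrt_gt0 : 0 < Num.sqrt (sg ^+ 2 * pi *+ 2).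
  by apply: lt_le_trans two_sg_le; rewrite mulr_gt0.
by rewrite -(mulr_natl (normal_peak sg)) /normal_peak ler_pdivrMr// mulrC ler_pdivlMr.
Qed.

Lemma binl1_le_dist a b s : a <= b -> binl1 a b sg s <= (b - a) / sg.
Proof.
move=> ab; have ba_ge0 : 0 <= b - a by rewrite subr_ge0.
apply: le_trans (@binned_l1_translate_le R (normal_prob a sg) (normal_prob b sg)
  (b - a) ((b - a) * normal_peak sg) ((a + b) / 2) _ _ _ _ _ _ _ s) _.
- exact: normal_prob_atomless.
- exact: normal_prob_atomless.
- exact: ba_ge0.
- exact: normal_cdf_shift.
- move=> x; rewrite -[in leRHS](subKr x (b - a)).
  by apply: normal_prob_oc_le; rewrite gerBl.
- move=> u t tc; apply: normal_prob_le_closer => // y /=.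
  rewrite in_itv/= => /andP[_ yt]; have : y <= (a + b) / 2 := le_trans yt tc.
  nra.
- move=> u t cu; apply: normal_prob_le_closer => // y /=.
  rewrite in_itv/= => /andP[uy _]; have : (a + b) / 2 < y := le_lt_trans cu uy.
  nra.
by rewrite -mulrnAr ler_wpM2l// normal_peak_le.
Qed.

End normal_binl1.

Lemma binl1C (R : realType) (m1 m2 sd : R) s :
  binl1 m1 m2 sd s = binl1 m2 m1 sd s.
Proof. by apply: eq_bigr => q _; rewrite distrC. Qed.

Theorem lemma5 (R : realType) (C : nat) (pl ph : R)
  (mu sigma : nat -> R -> R) (h : R -> R) (n : nat)
  (sigma_pos : forall p, pl <= p <= ph -> 0 < sigma n p) :
  forall (s : nat), (s <= C)%N -> forall p : R, pl <= p <= ph ->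
    binl1 (mu n p) (h p) (sigma n p) s <= `|mu n p - h p| / sigma n p.
Proof.
move=> s _ p p_range; have sigma_gt0 := sigma_pos p p_range.
have [mu_le|h_lt] := lerP (mu n p) (h p).
  exact: binl1_le_dist.
by rewrite binl1C; apply: binl1_le_dist => //; exact: ltW.
Qed.
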